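(* For all $k,l\ge1$ and every $X\in\mathfrak{W}'_k$, the operator $(\lambda(X)-X)L_{z_l}$ on $\mathfrak{H}^1$ belongs to $\mathfrak{W}'_{k+l}$.
   Context: Let $\mathfrak{H}=\mathbb{Q}\langle x,y\rangle$, $\mathfrak{H}^1=\mathbb{Q}+\mathfrak{H}y$, $\mathfrak{H}^1_n$ its homogeneous part of degree $n$; $L_w(w')=ww'$; products of operators denote composition. Let $z_k=x^{k-1}y$. The harmonic product $\ast$ on $\mathfrak{H}^1$ is the $\mathbb{Q}$-bilinear map with $1\ast w=w\ast1=w$ and $z_kw\ast z_lw'=z_k(w\ast z_lw')+z_l(z_kw\ast w')+z_{k+l}(w\ast w')$; $\mathcal{H}_w(v)=w\ast v$. $\mathfrak{W}$ is the $\mathbb{Q}$-span of the operators $\mathcal{H}_w$ ($w\in\mathfrak{H}^1$) on $\mathfrak{H}^1$; $\mathfrak{W}'$ (resp. $\mathfrak{W}'_n$) the $\mathbb{Q}$-span of the operators $L_{z_k}\mathcal{H}_w$ on $\mathfrak{H}^1$ with $k\ge1$, $w\in\mathfrak{H}^1$ (resp. $1\le k\le n$, $w\in\mathfrak{H}^1_{n-k}$). The $L_{z_k}\mathcal{H}_w$ over distinct pairs $(k,w)$, $w$ a word, are linearly independent, and $\lambda:\mathfrak{W}'\to\mathfrak{W}$ is the $\mathbb{Q}$-linear map with $\lambda(L_{z_k}\mathcal{H}_w)=\mathcal{H}_{z_kw}$. *)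

From HB Require Import structures.
From mathcomp Require Import all_boot all_order all_algebra.
Set Implicit Arguments. Unset Strict Implicit. Unset Printing Implicit Defensive.
Import Order.TTheory GRing.Theory Num.Theory.
Local Open Scope ring_scope.

(* A word of H^1 is z_{a_1} ... z_{a_r}, encoded as the list [:: a_1; ...; a_r]
   with all a_i >= 1 (z_k = x^{k-1} y).  An element of H^1 is represented by its
   coefficient function (seq nat -> rat); we only ever build finite combinations. *)
Definition word1 (v : seq nat) : bool := all (fun a => (0 < a)%N) v.

(* degree of the word z_{a_1}...z_{a_r} in H = Q<x,y> *)
Definition wdeg (v : seq nat) : nat := sumn v.

Definition delta (u : seq nat) : seq nat -> rat := fun w => (w == u)%:R.

Definition Lz (k : nat) (f : seq nat -> rat) : seq nat -> rat :=
  fun w => match w with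
           | a :: w' => if a == k then f w' else 0
           | [::] => 0
           end.

Definition addf (f g : seq nat -> rat) : seq nat -> rat := fun w => f w + g w.

Fixpoint harm (u : seq nat) : seq nat -> seq nat -> rat :=
  match u with
  | [::] => fun v => delta v
  | a :: u' =>
      fix harm' (v : seq nat) : seq nat -> rat :=
        match v with
        | [::] => delta (a :: u')
        | b :: v' =>
            addf (Lz a (harm u' (b :: v')))
                 (addf (Lz b (harm' v')) (Lz (a + b) (harm u' v')))
        end
  end.

(* An element of W'_n is given by a finite family of triples (c, k, w),
   standing for sum c * L_{z_k} H_w, with 1 <= k <= n and w a word of degree n-k. *)
Definition inWn (n : nat) (F : seq (rat * nat * seq nat)) : bool :=
  all (fun t => [&& (0 < t.1.2)%N, (t.1.2 <= n)%N, word1 t.2 & wdeg t.2 == (n - t.1.2)%N]) F.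

Definition opW (F : seq (rat * nat * seq nat)) (v : seq nat) : seq nat -> rat :=
  fun w => \sum_(t <- F) t.1.1 * Lz t.1.2 (harm t.2 v) w.

(* lambda of that operator: sum c * H_{z_k w}, applied to a word v *)
Definition lamW (F : seq (rat * nat * seq nat)) (v : seq nat) : seq nat -> rat :=
  fun w => \sum_(t <- F) t.1.1 * harm (t.1.2 :: t.2) v w.

From Pilot Require Import Defs.
From mathcomp Require Import all_boot all_order all_algebra ring.
Import GRing.Theory.
Local Open Scope ring_scope.

(* By linearity it suffices to treat one generator L_{z_a} H_u of
   W'_k (a >= 1, u a word of degree k - a).  Unfolding the harmonic product
   with both factors starting by a letter gives, for every word v,
     z_a u * z_l v = z_a (u * z_l v) + z_l (z_a u * v) + z_{a+l} (u * v),
   i.e.  (H_{z_a u} - L_{z_a} H_u) L_{z_l} = L_{z_l} H_{z_a u} + L_{z_{a+l}} H_u.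
   Both operators on the right are generators of W'_{k+l}: z_a u has degree k
   and u has degree (k + l) - (a + l). *)

(* The family describing (lambda(X) - X) L_{z_l}: each generator
   c L_{z_a} H_u contributes c L_{z_l} H_{z_a u} and c L_{z_{a+l}} H_u. *)
Fixpoint lambda_corr (l : nat) (F : seq (rat * nat * seq nat))
    : seq (rat * nat * seq nat) :=
  match F with
  | [::] => [::]
  | (c, a, u) :: F' => (c, l, a :: u) :: (c, (a + l)%N, u) :: lambda_corr l F'
  end.

Lemma harm_cons_cons a u b v :
  harm (a :: u) (b :: v) =
  Defs.addf (Lz a (harm u (b :: v)))
            (Defs.addf (Lz b (harm (a :: u) v)) (Lz (a + b) (harm u v))).
Proof. by []. Qed.

Lemma lambda_sub_generator a u l v w :
  harm (a :: u) (l :: v) w - Lz a (harm u (l :: v)) w =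
  Lz l (harm (a :: u) v) w + Lz (a + l) (harm u v) w.
Proof. by rewrite harm_cons_cons /Defs.addf addrC addKr. Qed.

Lemma opW_cons t F v w :
  opW (t :: F) v w = t.1.1 * Lz t.1.2 (harm t.2 v) w + opW F v w.
Proof. by rewrite /opW big_cons. Qed.

Lemma lamW_cons t F v w :
  lamW (t :: F) v w = t.1.1 * harm (t.1.2 :: t.2) v w + lamW F v w.
Proof. by rewrite /lamW big_cons. Qed.

Lemma lambda_corrP l F v w :
  lamW F (l :: v) w - opW F (l :: v) w = opW (lambda_corr l F) v w.
Proof.
elim: F => [|[[c a] u] F IH]; first by rewrite /lamW /opW !big_nil subrr.
rewrite [lambda_corr _ _]/= lamW_cons !opW_cons -IH; cbn [fst snd].
have gen := lambda_sub_generator a u l v w.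
(* Abstract the coefficients so that [ring] does not unfold [harm]. *)
move: (harm (a :: u) (l :: v) w) (Lz a (harm u (l :: v)) w) gen => h o gen.
move: (Lz l _ w) (Lz (a + l) _ w) (lamW F _ w) (opW F _ w) gen => x y L O gen.
have -> : h = x + y + o by rewrite -gen subrK.
by ring.
Qed.

Lemma lambda_corr_in k l F :
  (1 <= l)%N -> inWn k F -> inWn (k + l) (lambda_corr l F).
Proof.
move=> hl; elim: F => [|[[c a] u] F IH] //= /andP[/and4P[ha hak hu /eqP hdeg] /IH ->].
rewrite andbT hl ha hu leq_addl addnK addn_gt0 ha leq_add2r hak subnDr hdeg.
by rewrite subnKC // !eqxx.
Qed.

Theorem mainTheorem12 (k l : nat) (hk : (1 <= k)%N) (hl : (1 <= l)%N)
    (F : seq (rat * nat * seq nat)) (hF : inWn k F) :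
  exists G : seq (rat * nat * seq nat), inWn (k + l) G /\
    forall v : seq nat, word1 v ->
      forall w : seq nat, lamW F (l :: v) w - opW F (l :: v) w = opW G v w.
Proof.
exists (lambda_corr l F); split; first exact: lambda_corr_in.
by move=> v _ w; apply: lambda_corrP.
Qed.
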